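(* Let $M \ge 1$ be a power of $2$ and let $\mathbf{a}, \mathbf{b} \in \mathbb{C}^{M}$ be such that the vector $\begin{bmatrix}\mathbf{a}\\ \mathbf{b}\end{bmatrix} \in \mathbb{C}^{2M}$ is nonzero. Suppose that $\begin{bmatrix}\mathbf{a}\\ \mathbf{b}\end{bmatrix}$ is an eigenvector of $\mathbf{T}_{4M,1}(\mathbf{h})$ for every $\mathbf{h} \in \mathbb{C}^{4M}$. Then for every $\mathbf{g} \in \mathbb{C}^{8M}$, both vectors $$\frac{1}{\sqrt{2}}\begin{bmatrix}\mathbf{a}\\ \mathbf{b}\\ \mathbf{b}\\ -\mathbf{a}\end{bmatrix} \quad\text{and}\quad \frac{1}{\sqrt{2}}\begin{bmatrix}\mathbf{a}\\ \mathbf{b}\\ -\mathbf{b}\\ \mathbf{a}\end{bmatrix} \in \mathbb{C}^{4M}$$ are eigenvectors of $\mathbf{T}_{8M,1}(\mathbf{g})$.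
   Context: For a complex matrix $A$, $A^*$ denotes its entrywise complex conjugate and $A^\dagger$ its conjugate transpose. For $K$ a power of $2$ and $\mathbf{h} = (h_1,\dots,h_{2K})^T \in \mathbb{C}^{2K}$, write $\mathbf{h}_{K,1} = (h_1,\dots,h_K)^T$ and $\mathbf{h}_{K,2} = (h_{K+1},\dots,h_{2K})^T$. The ''equivalent channel'' matrices $\mathcal{E}_{K,1}(\mathbf{h}), \mathcal{E}_{K,2}(\mathbf{h})$ (of size $K \times (K/2)$, for $\mathbf{h} \in \mathbb{C}^K$, $K \ge 2$ a power of $2$) are defined recursively by $$\mathcal{E}_{2,1}(h_1,h_2) = \begin{bmatrix} h_1 \\ h_2^* \end{bmatrix},\qquad \mathcal{E}_{2,2}(h_1,h_2) = \begin{bmatrix} h_2 \\ -h_1^* \end{bmatrix},$$ and, for $\mathbf{h} \in \mathbb{C}^{2K}$, $$\mathcal{E}_{2K,1}(\mathbf{h}) = \begin{bmatrix} \mathcal{E}_{K,1}(\mathbf{h}_{K,1}) & \mathcal{E}_{K,2}(\mathbf{h}_{K,2}) \\ \mathcal{E}_{K,1}^*(\mathbf{h}_{K,2}) & -\mathcal{E}_{K,2}^*(\mathbf{h}_{K,1}) \end{bmatrix},\qquad \mathcal{E}_{2K,2}(\mathbf{h}) = \begin{bmatrix} -\mathcal{E}_{K,2}(\mathbf{h}_{K,1}) & -\mathcal{E}_{K,1}(\mathbf{h}_{K,2}) \\ -\mathcal{E}_{K,2}^*(\mathbf{h}_{K,2}) & \mathcal{E}_{K,1}^*(\mathbf{h}_{K,1})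 \end{bmatrix}.$$ (These arise from the recursively defined linear space-time code $G_1[s]=s_1$, $G_{2K}[\mathbf{s}] = \begin{bmatrix} G_K[\mathbf{s}_{K,1}] & G_K[\mathbf{s}_{K,2}] \\ -G_K[\mathbf{s}_{K,2}^*] & G_K[\mathbf{s}_{K,1}^*]\end{bmatrix}$ by splitting the symbols into two partitions.) For $\mathbf{h} \in \mathbb{C}^K$ define the $(K/2)\times(K/2)$ Hermitian matrix $\mathbf{T}_{K,1}(\mathbf{h}) = \mathcal{E}_{K,1}^\dagger(\mathbf{h})\,\mathcal{E}_{K,1}(\mathbf{h})$. *)

From HB Require Import structures.
From mathcomp Require Import all_boot all_order all_algebra.
From mathcomp Require Import complex.
From mathcomp Require Import reals.
Set Implicit Arguments. Unset Strict Implicit. Unset Printing Implicit Defensive.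
Import Order.TTheory GRing.Theory Num.Theory.
Local Open Scope ring_scope.

Section Defs.
Variable R : rcfType.
Local Notation C := R[i].

(* Entrywise description of the pair (E_{K,1}(h), E_{K,2}(h)) for K = 2^(k+1),
   with h given as a sequence of coefficients (index n = h_{n+1}),
   matrix entries indexed by (row, column), 0-based. *)
Fixpoint Ef (k : nat) (h : nat -> C) : (nat -> nat -> C) * (nat -> nat -> C) :=
  match k with
  | 0 =>
      ((fun i _ => if i == 0%N then h 0%N else conjc (h 1%N)),
       (fun i _ => if i == 0%N then h 1%N else - conjc (h 0%N)))
  | k'.+1 =>
      let K := (2 ^ k'.+1)%N in
      let L := (2 ^ k')%N in
      let h1 := h in
      let h2 := fun n => h (K + n)%N in
      let A1 := Ef k' h1 in
      let A2 := Ef k' h2 in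
      ((fun i j =>
          if (i < K)%N then
            (if (j < L)%N then A1.1 i j else A2.2 i (j - L)%N)
          else
            (if (j < L)%N then conjc (A2.1 (i - K)%N j)
             else - conjc (A1.2 (i - K)%N (j - L)%N))),
       (fun i j =>
          if (i < K)%N then
            (if (j < L)%N then - A1.2 i j else - A2.1 i (j - L)%N)
          else
            (if (j < L)%N then - conjc (A2.2 (i - K)%N j)
             else conjc (A1.1 (i - K)%N (j - L)%N))))
  end.

(* coefficients of a column vector, as a function on nat (0 outside range) *)
Definition vnat (n : nat) (h : 'cV[C]_n) : nat -> C :=
  fun m => match @insub _ (fun x => (x < n)%N) 'I_n m with
           | Some i => h i 0
           | None => 0
           end.

Definition E1 (k : nat) (h : 'cV[C]_(2 ^ k.+1)) : 'M[C]_(2 ^ k.+1, 2 ^ k) :=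
  \matrix_(i, j) (Ef k (vnat h)).1 i j.
Definition E2 (k : nat) (h : 'cV[C]_(2 ^ k.+1)) : 'M[C]_(2 ^ k.+1, 2 ^ k) :=
  \matrix_(i, j) (Ef k (vnat h)).2 i j.

Definition ctrmx (m n : nat) (A : 'M[C]_(m, n)) : 'M[C]_(n, m) :=
  (map_mx conjc A)^T.

Definition T1 (k : nat) (h : 'cV[C]_(2 ^ k.+1)) : 'M[C]_(2 ^ k) :=
  ctrmx (E1 h) *m E1 h.

Definition eigenvector (n : nat) (A : 'M[C]_n) (v : 'cV[C]_n) : Prop :=
  v != 0 /\ exists lam : C, A *m v = lam *: v.

Lemma dbl_pow2 (m : nat) : (2 ^ m + 2 ^ m = 2 ^ m.+1)%N.
Proof. by rewrite expnS mul2n addnn. Qed.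

Definition stack2 (m : nat) (a b : 'cV[C]_(2 ^ m)) : 'cV[C]_(2 ^ m.+1) :=
  castmx (dbl_pow2 m, erefl 1%N) (col_mx a b).

End Defs.

From HB Require Import structures.
From mathcomp Require Import all_boot all_order all_algebra.
From mathcomp Require Import complex.
From mathcomp Require Import reals.
From mathcomp Require Import zify ring.
Import Order.TTheory GRing.Theory Num.Theory.
Local Open Scope ring_scope.

(* Write M = 2^m, x = [a; b] and, for s = 1 or s = -1, v_s = [x; s J x] with
   J [a; b] = [b; -a].  Cut g in C^(8M) into quarters [g1; g2; g3; g4] of length 2M
   and put u = [g1 + s g4; g2 - s g3] in C^(4M).  Unfolding two levels of the
   recursion of E, the quarters of E_{8M,1}(g) are (conjugated, signed) blocks
   E_{2M,i}(g_j), which regroup into blocks of E_{4M,1}(u):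
     E_{8M,1}(g) v_s = [w; P_s w],           w = E_{4M,1}(u) x,  P_s [w1; w2] = s [-w2; w1],
     E_{8M,1}(g)^† [w; P_s w] = [z; s J z],  z = E_{4M,1}(u)^† w.
   Hence T_{8M,1}(g) v_s = [y; s J y] for y = T_{4M,1}(u) x, and the hypothesis at
   h = u gives y = lam x, so v_s is an eigenvector for the same eigenvalue lam. *)

Ltac resolve_ltn_ifs := repeat match goal with
 | |- context [ if (?a < ?b)%N then _ else _ ] =>
     let H := fresh in
     first [ (have H : (a < b)%N by lia); rewrite H; clear H
           | (have H : ~~ (a < b)%N by lia); rewrite (negbTE H); clear H ]
 end.

Section EquivalentChannel.
Context {R : rcfType}.
Local Notation C := R[i].

Lemma Ef1S k (h : nat -> C) i j : (Ef k.+1 h).1 i j =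
  (if (i < 2 ^ k.+1)%N then
     (if (j < 2 ^ k)%N then (Ef k h).1 i j
      else (Ef k (fun n => h (2 ^ k.+1 + n)%N)).2 i (j - 2 ^ k)%N)
   else
     (if (j < 2 ^ k)%N then conjc ((Ef k (fun n => h (2 ^ k.+1 + n)%N)).1 (i - 2 ^ k.+1)%N j)
      else - conjc ((Ef k h).2 (i - 2 ^ k.+1)%N (j - 2 ^ k)%N))).
Proof. by []. Qed.

Lemma Ef2S k (h : nat -> C) i j : (Ef k.+1 h).2 i j =
  (if (i < 2 ^ k.+1)%N then
     (if (j < 2 ^ k)%N then - (Ef k h).2 i j
      else - (Ef k (fun n => h (2 ^ k.+1 + n)%N)).1 i (j - 2 ^ k)%N)
   else
     (if (j < 2 ^ k)%N then - conjc ((Ef k (fun n => h (2 ^ k.+1 + n)%N)).2 (i - 2 ^ k.+1)%N j)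
      else conjc ((Ef k h).1 (i - 2 ^ k.+1)%N (j - 2 ^ k)%N))).
Proof. by []. Qed.

Lemma Ef_lin k (h h1 h2 : nat -> C) (s : C) : conjc s = s ->
  (forall n, (n < 2 ^ k.+1)%N -> h n = h1 n + s * h2 n) ->
  forall i j, (Ef k h).1 i j = (Ef k h1).1 i j + s * (Ef k h2).1 i j /\
              (Ef k h).2 i j = (Ef k h1).2 i j + s * (Ef k h2).2 i j.
Proof.
move=> s_real; elim: k h h1 h2 => [|k IH] h h1 h2 hh i j.
  by rewrite /= !hh // !(rmorphD, rmorphM) /= s_real; split; case: ifP => _; ring.
have hsplit : (2 ^ k.+2 = 2 ^ k.+1 + 2 ^ k.+1)%N by rewrite dbl_pow2.
have IH1 := IH h h1 h2 (fun n hn => hh n (ltac:(lia) : (n < 2 ^ k.+2)%N)).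
have IH2 := IH (fun n => h (2 ^ k.+1 + n)%N) (fun n => h1 (2 ^ k.+1 + n)%N)
  (fun n => h2 (2 ^ k.+1 + n)%N)
  (fun n hn => hh _ (ltac:(lia) : (2 ^ k.+1 + n < 2 ^ k.+2)%N)).
rewrite !Ef1S !Ef2S.
split; case: ifP => _; case: ifP => _;
  rewrite ?(proj1 (IH1 _ _)) ?(proj2 (IH1 _ _)) ?(proj1 (IH2 _ _)) ?(proj2 (IH2 _ _))
          ?(rmorphN, rmorphD, rmorphM) /= ?s_real; ring.
Qed.

Lemma eq_Ef k (h h' : nat -> C) :
  (forall n, (n < 2 ^ k.+1)%N -> h n = h' n) ->
  forall i j, (Ef k h).1 i j = (Ef k h').1 i j /\ (Ef k h).2 i j = (Ef k h').2 i j.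
Proof.
move=> eq_h i j.
have eq_h0 n : (n < 2 ^ k.+1)%N -> h n = h' n + 0 * 0 by rewrite mul0r addr0; apply: eq_h.
by have := @Ef_lin k h h' (fun _ => 0) 0 (rmorph0 _) eq_h0 i j; rewrite !mul0r !addr0.
Qed.

Definition catf n (x y : nat -> C) k := if (k < n)%N then x k else y (k - n)%N.

Definition matvec n (E : nat -> nat -> C) (x : nat -> C) i :=
  \sum_(0 <= j < n) E i j * x j.

Definition adjvec n (E : nat -> nat -> C) (w : nat -> C) j :=
  \sum_(0 <= i < n) conjc (E i j) * w i.

Lemma sum_pow2S k (F : nat -> C) :
  \sum_(0 <= j < 2 ^ k.+1) F j = \sum_(0 <= j < 2 ^ k) (F j + F (2 ^ k + j)%N).
Proof.
rewrite -dbl_pow2 big_split /= !big_mkord big_split_ord /=.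
by congr (_ + _); apply: eq_bigr.
Qed.

Lemma ltn_pow2_quarters m l : (l < 2 ^ m.+2)%N ->
  exists2 r, (r < 2 ^ m)%N & [\/ l = r, l = (2 ^ m + r)%N, l = (2 ^ m.+1 + r)%N
                                | l = (2 ^ m.+1 + (2 ^ m + r))%N].
Proof.
have := expnS 2 m; have := expnS 2 m.+1 => e2 e1 hl.
case: (ltnP l (2 ^ m)) => h1; first by exists l => //; constructor 1.
case: (ltnP l (2 ^ m.+1)) => h2; first by exists (l - 2 ^ m)%N; [lia | constructor 2; lia].
case: (ltnP l (2 ^ m.+1 + 2 ^ m)) => h3.
  by exists (l - 2 ^ m.+1)%N; [lia | constructor 3; lia].
by exists (l - 2 ^ m.+1 - 2 ^ m)%N; [lia | constructor 4; lia].
Qed.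

(* With M = 2^m: [twist m s x] is [x; s J x], [merge m s g] is
   [g1 + s g4; g2 - s g3] and [rot m s w] is s [-w2; w1], all on the coefficient
   functions on nat used by [Ef]. *)
Definition twist m (s : C) (x : nat -> C) :=
  catf (2 ^ m.+1) x (catf (2 ^ m) (fun n => s * x (2 ^ m + n)%N) (fun n => - (s * x n))).

Definition merge m (s : C) (g : nat -> C) n :=
  g n + s * catf (2 ^ m.+1) (fun k => g (2 ^ m.+2 + (2 ^ m.+1 + k))%N)
                           (fun k => - g (2 ^ m.+2 + k)%N) n.

Definition rot m (s : C) (w : nat -> C) n :=
  s * catf (2 ^ m.+1) (fun k => - w (2 ^ m.+1 + k)%N) w n.

Lemma Ef_merge_lo m s g i j : conjc s = s ->
  (Ef m (merge m s g)).1 i j =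
    (Ef m g).1 i j + s * (Ef m (fun n => g (2 ^ m.+2 + (2 ^ m.+1 + n)))%N).1 i j /\
  (Ef m (merge m s g)).2 i j =
    (Ef m g).2 i j + s * (Ef m (fun n => g (2 ^ m.+2 + (2 ^ m.+1 + n)))%N).2 i j.
Proof. by move=> s_real; apply: Ef_lin => // n hn; rewrite /merge /catf hn. Qed.

Lemma Ef_merge_hi m s g i j : conjc s = s ->
  (Ef m (fun n => merge m s g (2 ^ m.+1 + n)%N)).1 i j =
    (Ef m (fun n => g (2 ^ m.+1 + n)%N)).1 i j
    + (- s) * (Ef m (fun n => g (2 ^ m.+2 + n))%N).1 i j /\
  (Ef m (fun n => merge m s g (2 ^ m.+1 + n)%N)).2 i j =
    (Ef m (fun n => g (2 ^ m.+1 + n)%N)).2 i j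
    + (- s) * (Ef m (fun n => g (2 ^ m.+2 + n))%N).2 i j.
Proof.
move=> s_real; apply: Ef_lin => [|n _]; first by rewrite rmorphN /= s_real.
by rewrite /merge /catf ltnNge leq_addr /= addKn mulrN mulNr.
Qed.

Lemma matvec_twist m s g (x : nat -> C) l : s = 1 \/ s = -1 -> (l < 2 ^ m.+3)%N ->
  matvec (2 ^ m.+2) (Ef m.+2 g).1 (twist m s x) l =
  catf (2 ^ m.+2) (matvec (2 ^ m.+1) (Ef m.+1 (merge m s g)).1 x)
    (rot m s (matvec (2 ^ m.+1) (Ef m.+1 (merge m s g)).1 x)) l.
Proof.
have := expnS 2 m; have := expnS 2 m.+1; have := expnS 2 m.+2 => e3 e2 e1 hs hl.
have s_real : conjc s = s by case: hs => ->; rewrite ?rmorphN rmorph1.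
have [r hr] := @ltn_pow2_quarters _ _ hl.
case=> ->; rewrite /catf /rot /catf; resolve_ltn_ifs; rewrite ?addKn; resolve_ltn_ifs;
  rewrite /matvec !sum_pow2S ?mulrN ?mulr_sumr -?sumrN;
  apply: eq_big_nat => j /andP [_ hj];
  rewrite /twist /catf !(Ef1S, Ef2S); resolve_ltn_ifs; rewrite ?addKn; resolve_ltn_ifs;
  rewrite ?(proj1 (Ef_merge_lo _ _ _ _ _ s_real)) ?(proj2 (Ef_merge_lo _ _ _ _ _ s_real))
          ?(proj1 (Ef_merge_hi _ _ _ _ _ s_real)) ?(proj2 (Ef_merge_hi _ _ _ _ _ s_real))
          ?(rmorphN, rmorphD, rmorphM) /= ?s_real ?conjcK; case: hs => ->; ring.
Qed.

Lemma adjvec_rot m s g (w : nat -> C) c : s = 1 \/ s = -1 -> (c < 2 ^ m.+2)%N ->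
  adjvec (2 ^ m.+3) (Ef m.+2 g).1 (catf (2 ^ m.+2) w (rot m s w)) c =
  twist m s (adjvec (2 ^ m.+2) (Ef m.+1 (merge m s g)).1 w) c.
Proof.
have := expnS 2 m; have := expnS 2 m.+1; have := expnS 2 m.+2 => e3 e2 e1 hs hc.
have s_real : conjc s = s by case: hs => ->; rewrite ?rmorphN rmorph1.
have [q hq] := @ltn_pow2_quarters _ _ hc.
case=> ->; rewrite /twist /catf; resolve_ltn_ifs; rewrite ?addKn; resolve_ltn_ifs;
  rewrite /adjvec !sum_pow2S ?mulrN ?mulr_sumr -?sumrN;
  apply: eq_big_nat => i /andP [_ hi];
  rewrite /rot /catf; resolve_ltn_ifs; rewrite ?addKn; resolve_ltn_ifs;
  rewrite !(Ef1S, Ef2S); resolve_ltn_ifs; rewrite ?addKn; resolve_ltn_ifs;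
  rewrite ?(proj1 (Ef_merge_lo _ _ _ _ _ s_real)) ?(proj2 (Ef_merge_lo _ _ _ _ _ s_real))
          ?(proj1 (Ef_merge_hi _ _ _ _ _ s_real)) ?(proj2 (Ef_merge_hi _ _ _ _ _ s_real))
          ?(rmorphN, rmorphD, rmorphM) /= ?s_real ?conjcK; case: hs => ->; ring.
Qed.

Lemma vnat_ord n (x : 'cV[C]_n) (i : 'I_n) : vnat x i = x i 0.
Proof.
rewrite /vnat; case: insubP => [j _ hj | ]; last by rewrite ltn_ord.
by rewrite (val_inj hj).
Qed.

Lemma vnat_out n (x : 'cV[C]_n) k : (n <= k)%N -> vnat x k = 0.
Proof. by move=> hk; rewrite /vnat insubN // -leqNgt. Qed.

Lemma vnat_opp n (x : 'cV[C]_n) k : vnat (- x) k = - vnat x k.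
Proof.
case: (ltnP k n) => hk; last by rewrite !vnat_out // oppr0.
by rewrite -[k]/(val (Ordinal hk)) !vnat_ord mxE.
Qed.

Lemma vnat_stack2 m (a b : 'cV[C]_(2 ^ m)) k :
  vnat (stack2 a b) k = catf (2 ^ m) (vnat a) (vnat b) k.
Proof.
rewrite /catf; case: (ltnP k (2 ^ m.+1)) => hk; last first.
  have := expnS 2 m => e1.
  by rewrite !vnat_out ?if_same //; lia.
rewrite -[k]/(val (Ordinal hk)) vnat_ord castmxE mxE [cast_ord _ (0 : 'I_1)]ord1.
case: splitP => [i /= -> | i /= ->]; first by rewrite ltn_ord vnat_ord.
by rewrite ltnNge leq_addr addKn vnat_ord.
Qed.

Lemma vnat_stack2_twist m s (a b c d : 'cV[C]_(2 ^ m)) :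
  (forall k, vnat c k = s * vnat b k) -> (forall k, vnat d k = - (s * vnat a k)) ->
  forall k, (k < 2 ^ m.+2)%N ->
  vnat (stack2 (stack2 a b) (stack2 c d)) k = twist m s (vnat (stack2 a b)) k.
Proof.
have := expnS 2 m; have := expnS 2 m.+1 => e2 e1 eq_c eq_d k hk.
rewrite vnat_stack2 /twist /catf !vnat_stack2 /catf.
by repeat case: ltnP => ?; rewrite ?addKn ?eq_c ?eq_d //; exfalso; lia.
Qed.

Lemma T1_mulmxE k (h : 'cV[C]_(2 ^ k.+1)) (x : 'cV[C]_(2 ^ k)) (i : 'I_(2 ^ k)) :
  (T1 h *m x) i 0 =
  adjvec (2 ^ k.+1) (Ef k (vnat h)).1 (matvec (2 ^ k) (Ef k (vnat h)).1 (vnat x)) i.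
Proof.
rewrite /T1 -mulmxA mxE /adjvec big_mkord; apply: eq_bigr => l _.
rewrite /ctrmx !mxE /matvec big_mkord; congr (_ * _).
by apply: eq_bigr => j _; rewrite mxE vnat_ord.
Qed.

Lemma twist_scale m s (x y : nat -> C) lam c :
  (forall n, (n < 2 ^ m.+1)%N -> y n = lam * x n) -> (c < 2 ^ m.+2)%N ->
  twist m s y c = lam * twist m s x c.
Proof.
have := expnS 2 m; have := expnS 2 m.+1 => e2 e1 eq_y hc.
rewrite /twist /catf; case: ltnP => h1; first exact: eq_y.
by case: ltnP => h2; rewrite eq_y; try ring; lia.
Qed.

Lemma T1_mulmx_twist {m s} {x : 'cV[C]_(2 ^ m.+1)} {v : 'cV[C]_(2 ^ m.+2)}
    {g : 'cV[C]_(2 ^ m.+3)} {lam : C} :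
  s = 1 \/ s = -1 ->
  (forall k, (k < 2 ^ m.+2)%N -> vnat v k = twist m s (vnat x) k) ->
  T1 (\col_(i < 2 ^ m.+2) merge m s (vnat g) i) *m x = lam *: x ->
  T1 g *m v = lam *: v.
Proof.
move=> hs; set u := \col_(i < 2 ^ m.+2) _ => eq_v eig_x.
set W := matvec (2 ^ m.+1) (Ef m.+1 (merge m s (vnat g))).1 (vnat x).
have Ef_u i j : (Ef m.+1 (vnat u)).1 i j = (Ef m.+1 (merge m s (vnat g))).1 i j.
  suff /eq_Ef/(_ i j)[] : forall n, (n < 2 ^ m.+2)%N -> vnat u n = merge m s (vnat g) n.
    by [].
  by move=> n hn; rewrite -[n]/(val (Ordinal hn)) vnat_ord mxE.
have eig_W n : (n < 2 ^ m.+1)%N ->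
    adjvec (2 ^ m.+2) (Ef m.+1 (merge m s (vnat g))).1 W n = lam * vnat x n.
  move=> hn; move/matrixP/(_ (Ordinal hn) 0): eig_x.
  rewrite T1_mulmxE mxE -vnat_ord => <-.
  rewrite /adjvec /W /matvec; apply: eq_big_nat => l _.
  by rewrite Ef_u; congr (_ * _); apply: eq_big_nat => j _; rewrite Ef_u.
apply/matrixP => i j; rewrite (ord1 j) {j} T1_mulmxE [RHS]mxE -vnat_ord eq_v //.
rewrite -(@twist_scale m s _ _ _ _ eig_W) // -adjvec_rot //.
apply: eq_big_nat => l /andP [_ hl]; rewrite -matvec_twist //; congr (_ * _).
by apply: eq_big_nat => j /andP [_ hj]; rewrite eq_v.
Qed.

Lemma twist_neq0 {m s} {x : 'cV[C]_(2 ^ m.+1)} {v : 'cV[C]_(2 ^ m.+2)} :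
  (forall k, (k < 2 ^ m.+2)%N -> vnat v k = twist m s (vnat x) k) -> x != 0 -> v != 0.
Proof.
move=> eq_v; apply: contraNneq => v0; apply/eqP/matrixP => i j.
have hi : (i < 2 ^ m.+2)%N by rewrite (leq_trans (ltn_ord i)) ?leq_exp2l.
rewrite (ord1 j) mxE -vnat_ord.
have := eq_v i hi; rewrite /twist /catf ltn_ord => <-.
by rewrite v0 -[nat_of_ord i]/(nat_of_ord (Ordinal hi)) vnat_ord mxE.
Qed.

Lemma eigenvector_twist m s (x : 'cV[C]_(2 ^ m.+1)) (v : 'cV[C]_(2 ^ m.+2))
    (g : 'cV[C]_(2 ^ m.+3)) :
  s = 1 \/ s = -1 -> (forall h, eigenvector (T1 h) x) ->
  (forall k, (k < 2 ^ m.+2)%N -> vnat v k = twist m s (vnat x) k) ->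
  eigenvector (T1 g) v.
Proof.
move=> hs eig_x eq_v; have [x_neq0 [lam eig_u]] := eig_x (\col_i merge m s (vnat g) i).
by split; [exact: twist_neq0 eq_v x_neq0 | exists lam; exact: T1_mulmx_twist hs eq_v eig_u].
Qed.

Lemma eigenvectorZ n (A : 'M[C]_n) v c : c != 0 -> eigenvector A v -> eigenvector A (c *: v).
Proof.
move=> c_neq0 [v_neq0 [lam eig_v]]; split; first by rewrite scaler_eq0 negb_or c_neq0.
by exists lam; rewrite -scalemxAr eig_v !scalerA mulrC.
Qed.

End EquivalentChannel.

Theorem proposition5 (R : realType) (m : nat) (a b : 'cV[R[i]]_(2 ^ m)) :
  stack2 a b != 0 ->
  (forall h : 'cV[R[i]]_(2 ^ m.+2), eigenvector (T1 h) (stack2 a b)) ->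
  forall g : 'cV[R[i]]_(2 ^ m.+3),
    eigenvector (T1 g)
      (((Num.sqrt (2 : R))%:C)%C^-1 *: stack2 (stack2 a b) (stack2 b (- a))) /\
    eigenvector (T1 g)
      (((Num.sqrt (2 : R))%:C)%C^-1 *: stack2 (stack2 a b) (stack2 (- b) a)).
Proof.
(* The nonvanishing of [stack2 a b] is already part of [eigenvector]. *)
move=> _ eig_ab g.
have c_neq0 : ((Num.sqrt (2 : R))%:C)%C^-1 != 0.
  by rewrite invr_eq0 fmorph_eq0 sqrtr_eq0 -ltNge ltr0n.
split; apply: eigenvectorZ => //.
- apply: (@eigenvector_twist _ m 1) eig_ab _ => [|k hk]; first by left.
  by apply: vnat_stack2_twist hk => j; rewrite ?vnat_opp; ring.
- apply: (@eigenvector_twist _ m (-1)) eig_ab _ => [|k hk]; first by right.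
  by apply: vnat_stack2_twist hk => j; rewrite ?vnat_opp; ring.
Qed.
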